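(* Let $D$ be an oriented graph whose missing graph is a vertex-disjoint union of paths, and let $ab$, $xy$, $zt$ be missing edges of $D$. If $xy$ loses to $ab$ and $zt$ loses to $ab$, then $\{x,y\}\cap\{z,t\}\neq\emptyset$.
   Context: All digraphs are finite oriented graphs. $N^+(v)$ is the out-neighborhood; $N^{++}(v)$ is the set of vertices $w\notin N^+(v)\cup\{v\}$ with $u\to w$ for some $u\in N^+(v)$. A missing edge is a pair of distinct non-adjacent vertices; the missing graph is formed by the missing edges. For missing edges $\{x,y\},\{a,b\}$, $\{x,y\}$ loses to $\{a,b\}$ if the endpoints can be labelled so that $x\to a$, $b\notin N^+(x)\cup N^{++}(x)$, $y\to b$, $a\notin N^+(y)\cup N^{++}(y)$. *)

From mathcomp Require Import all_boot.
Set Implicit Arguments. Unset Strict Implicit. Unset Printing Implicit Defensive.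

Definition oriented (T : finType) (arc : rel T) : Prop :=
  (forall v, ~~ arc v v) /\ (forall u v, arc u v -> ~~ arc v u).

Definition outN (T : finType) (arc : rel T) (v : T) : {set T} :=
  [set w | arc v w].

Definition outN2 (T : finType) (arc : rel T) (v : T) : {set T} :=
  [set w | (w \notin outN arc v) && (w != v) &&
           [exists u, (u \in outN arc v) && arc u w]].

Definition missing (T : finType) (arc : rel T) (x y : T) : bool :=
  [&& x != y, ~~ arc x y & ~~ arc y x].

Definition loses_lab (T : finType) (arc : rel T) (x y a b : T) : Prop :=
  [/\ arc x a, b \notin outN arc x :|: outN2 arc x,
      arc y b & a \notin outN arc y :|: outN2 arc y].

Definition loses_to (T : finType) (arc : rel T) (x y a b : T) : Prop :=
  exists x' y' a' b',
    ((x' = x /\ y' = y) \/ (x' = y /\ y' = x)) /\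
    ((a' = a /\ b' = b) \/ (a' = b /\ b' = a)) /\
    loses_lab arc x' y' a' b'.

(* Vertices not on any listed sequence are isolated (trivial paths). *)
Definition union_of_paths (T : finType) (adj : rel T) : Prop :=
  exists ps : seq (seq T),
    uniq (flatten ps) /\
    forall x y, adj x y <->
      exists2 p, p \in ps &
        ((x, y) \in zip p (behead p)) || ((y, x) \in zip p (behead p)).

Definition missing_graph (T : finType) (arc : rel T) : rel T :=
  fun x y => missing arc x y.

(* Call a vertex far from u if it lies outside N^+(u) u N^++(u).  After
   relabelling, x -> a, y -> b, z -> a, t -> b, with b far from x and z and
   a far from y and t.  Then x and t are non-adjacent, since x -> t -> b would
   bring b within distance two of x and t -> x -> a would do the same for a
   and t; likewise y and z, and for the same reason x and y, z and t.  Disjoint pairs would therefore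
   span a 4-cycle x y z t of the missing graph.  But numbering the vertices
   along the paths gives adjacent vertices consecutive numbers, and a closed
   walk x y z t x with x <> z and y <> t cannot do that. *)
From mathcomp Require Import all_boot zify.
Set Implicit Arguments. Unset Strict Implicit.

Section SeqInfix.

Variable T : eqType.

Lemma zip_behead_infix (p : seq T) v w :
  (v, w) \in zip p (behead p) -> infix [:: v; w] p.
Proof.
elim: p => [|u [|u' p] IHp] //; rewrite [zip _ _]/= in_cons.
case/orP => [/eqP [<- <-]|vw_p]; first exact: (prefix_infix [:: v; w] p).
exact: (infix_catl [:: u] (IHp vw_p)).
Qed.

Lemma infix_flatten (ps : seq (seq T)) p : p \in ps -> infix p (flatten ps).
Proof.
elim: ps => [|q ps IHps] //=; rewrite in_cons => /orP [/eqP ->|p_ps].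
  exact: prefix_infix.
exact/infix_catl/IHps.
Qed.

Lemma index_infix2 (s : seq T) v w :
  uniq s -> infix [:: v; w] s ->
  [/\ v \in s, w \in s & index w s = (index v s).+1].
Proof.
move=> uniq_s /infixP [s1 [s2 def_s]]; subst s.
move: uniq_s; rewrite cat_uniq => /and3P [_ /hasPn s1'vw /= /andP [vw _]].
have s1'v : v \notin s1 by apply: s1'vw; rewrite inE eqxx.
have s1'w : w \notin s1 by apply: s1'vw; rewrite !inE eqxx orbT.
rewrite !mem_cat !inE !eqxx !orbT !index_cat (negbTE s1'v) (negbTE s1'w) /=.
by move: vw; rewrite inE negb_or => /andP [/negbTE -> _]; rewrite !eqxx addnS.
Qed.

End SeqInfix.

Section UnionOfPaths.

Variable T : finType.

Lemma union_of_paths_index (adj : rel T) :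
  union_of_paths adj -> exists s : seq T, uniq s /\
    forall u v, adj u v -> [/\ u \in s, v \in s &
      index v s = (index u s).+1 \/ index u s = (index v s).+1].
Proof.
move=> [ps [uniq_ps adjE]]; exists (flatten ps); split=> // u v /adjE [p p_ps].
have infix_ps w w' : (w, w') \in zip p (behead p) ->
    [/\ w \in flatten ps, w' \in flatten ps
      & index w' (flatten ps) = (index w (flatten ps)).+1].
  by move/zip_behead_infix/infix_trans/(_ (infix_flatten p_ps))/(index_infix2 uniq_ps).
by case/orP => /infix_ps [? ? ?]; split; auto.
Qed.

Lemma union_of_paths_noC4 (adj : rel T) x y z t :
  union_of_paths adj -> adj x y -> adj y z -> adj z t -> adj t x ->
  x != z -> y != t -> False.
Proof.
move=> /union_of_paths_index [s [_ idx_adj]] xy yz zt tx.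
have [x_s y_s Exy] := idx_adj _ _ xy; have [_ z_s Eyz] := idx_adj _ _ yz.
have [_ t_s Ezt] := idx_adj _ _ zt; have [_ _ Etx] := idx_adj _ _ tx.
move=> /eqP xz /eqP yt.
have {}xz : index x s <> index z s by move/index_inj; auto.
have {}yt : index y s <> index t s by move/index_inj; auto.
lia.
Qed.

End UnionOfPaths.

Section LosingPairs.

Variables (T : finType) (arc : rel T).
Hypothesis arc_oriented : oriented arc.

Lemma far_nonadj u w c d :
  arc u c -> d \notin outN arc u :|: outN2 arc u -> arc w d -> ~~ arc u w.
Proof.
case: arc_oriented => _ arc_asym uc; rewrite !inE negb_or => /andP [u'd].
rewrite u'd /= => far_d wd; apply/negP => uw.
case: (eqVneq d u) far_d => [du|_] /=.
  by move: (arc_asym _ _ uw); rewrite -du wd.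
by move/existsPn/(_ w); rewrite inE uw wd.
Qed.

Lemma missing_of_far u w c d :
  u != w -> arc u c -> d \notin outN arc u :|: outN2 arc u ->
  arc w d -> c \notin outN arc w :|: outN2 arc w -> missing arc u w.
Proof.
by move=> uw uc far_d wd far_c; rewrite /missing uw (far_nonadj uc far_d wd)
  (far_nonadj wd far_c uc).
Qed.

Lemma loses_lab_missing x y a b : loses_lab arc x y a b -> missing arc x y.
Proof.
case=> xa far_b yb far_a.
have xy : x != y by apply: contra far_a => /eqP <-; rewrite !inE xa.
exact: missing_of_far xy xa far_b yb far_a.
Qed.

Lemma missing_sym x y : missing arc x y = missing arc y x.
Proof. by rewrite /missing eq_sym [~~ arc x y && _]andbC. Qed.

Lemma loses_lab_sym x y a b : loses_lab arc x y a b -> loses_lab arc y x b a.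
Proof. by case. Qed.

Lemma loses_toP x y a b : loses_to arc x y a b ->
  exists x' y', [/\ x' \in [set x; y], y' \in [set x; y] & loses_lab arc x' y' a b].
Proof.
move=> [x' [y' [a' [b' [Exy [Eab lab]]]]]].
have [x'_xy y'_xy] : x' \in [set x; y] /\ y' \in [set x; y].
  by case: Exy => [] [-> ->]; rewrite !inE !eqxx ?orbT.
case: Eab lab => [] [-> ->] lab; first by exists x', y'.
by exists y', x'; split; last exact: loses_lab_sym.
Qed.

Lemma loses_lab_meet x y z t a b :
  union_of_paths (missing_graph arc) ->
  loses_lab arc x y a b -> loses_lab arc z t a b ->
  [|| x == z, x == t, y == z | y == t].
Proof.
move=> paths lab_xy lab_zt; apply: contraT; rewrite !negb_or => /and4P [xz xt yz yt].
have [xa far_bx yb far_ay] := lab_xy; have [za far_bz tb far_at] := lab_zt.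
exfalso; apply: (union_of_paths_noC4 paths _ _ _ _ xz yt).
- exact: loses_lab_missing lab_xy.
- by rewrite /missing_graph missing_sym (missing_of_far _ za far_bz yb far_ay)
    // eq_sym.
- exact: loses_lab_missing lab_zt.
- by rewrite /missing_graph missing_sym (missing_of_far xt xa far_bx tb far_at).
Qed.

End LosingPairs.

Theorem lemma4p2 (T : finType) (arc : rel T) (a b x y z t : T) :
  oriented arc ->
  union_of_paths (missing_graph arc) ->
  missing arc a b -> missing arc x y -> missing arc z t ->
  loses_to arc x y a b -> loses_to arc z t a b ->
  [set x; y] :&: [set z; t] != set0.
Proof.
move=> orient paths _ _ _ /loses_toP [x' [y' [x'_xy y'_xy lab_xy]]].
move=> /loses_toP [z' [t' [z'_zt t'_zt lab_zt]]].
rewrite setI_eq0; apply/negP => disj.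
have apart u v : u \in [set x; y] -> v \in [set z; t] -> u == v = false.
  by move=> u_xy v_zt; apply/negbTE; apply: contraTneq u_xy => ->;
    rewrite (disjointFl disj v_zt).
move: (loses_lab_meet orient paths lab_xy lab_zt).
by rewrite !apart.
Qed.
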